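(* Let $n\ge2$, let $\gamma:I\to S^n$ be a spherical unit speed curve and let $P\in S^n$ with $P\neq\pm\mathbf{u}_n(s)$ for all $s\in I$. Then for $s\in I$: $ort_{\gamma,P}'(s)=\mathbf{0}$ if and only if either $ped_{\gamma,P}'(s)=\mathbf{0}$ or $ped_{\gamma,P}(s)$ is a singular point of $\Phi_P$.
   Context: $I\subset\mathbb{R}$ is an open interval and $S^n$ the unit sphere in $\mathbb{R}^{n+1}$; the dot denotes the Euclidean inner product. A regular curve $\gamma:I\to S^n$ is a spherical unit speed curve if, setting $\mathbf{u}_{-1}\equiv\mathbf{0}$, $\mathbf{u}_0=\gamma$, $\|\mathbf{u}_0'\|\equiv 1$, $\kappa_0\equiv 0$, the maps $\mathbf{u}_i(s)=\dfrac{\mathbf{u}_{i-1}'(s)+\kappa_{i-1}(s)\mathbf{u}_{i-2}(s)}{\|\mathbf{u}_{i-1}'(s)+\kappa_{i-1}(s)\mathbf{u}_{i-2}(s)\|}$ with $\kappa_i(s)=\|\mathbf{u}_{i-1}'(s)+\kappa_{i-1}(s)\mathbf{u}_{i-2}(s)\|>0$ are well-defined for $1\le i\le n-1$ and all $s\in I$. Then $\mathbf{u}_0(s),\dots,\mathbf{u}_{n-1}(s)$ are orthonormal, and the spherical dual curve $\mathbf{u}_n:I\to S^n$ is defined by requiring $\mathbf{u}_0(s),\dots,\mathbf{u}_n(s)$ orthonormal with $\det(\mathbf{u}_0(s),\dots,\mathbf{u}_n(s))=1$. For $P\in S^n$ with $P\cdot\mathbf{u}_n(s)\neq\pm1$,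 the spherical pedal curve is $ped_{\gamma,P}(s)=\dfrac{P-(P\cdot\mathbf{u}_n(s))\mathbf{u}_n(s)}{\sqrt{1-(P\cdot\mathbf{u}_n(s))^2}}$. For any $P\in S^n$ the spherical orthotomic curve is $ort_{\gamma,P}(s)=\sum_{i=0}^{n-1}(P\cdot\mathbf{u}_i(s))\mathbf{u}_i(s)-(P\cdot\mathbf{u}_n(s))\mathbf{u}_n(s)=P-2(P\cdot\mathbf{u}_n(s))\mathbf{u}_n(s)$. For $P\in S^n$, $\Phi_P:\mathbb{R}^{n+1}\to\mathbb{R}^{n+1}$ is $\Phi_P(\mathbf{x})=2(P\cdot\mathbf{x})\mathbf{x}-P$; a singular point of $\Phi_P$ is a point where its differential is not of full rank. *)

From Stdlib Require Import Reals Lra Lia.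
Open Scope R_scope.

(* A vector of R^(n+1) is represented by its coordinates 0..n. *)
Definition vec := nat -> R.

Definition vzero : vec := fun _ => 0.
Definition vadd (x y : vec) : vec := fun k => x k + y k.
Definition vscale (a : R) (x : vec) : vec := fun k => a * x k.
Definition vopp (x : vec) : vec := fun k => - x k.
Definition vsub (x y : vec) : vec := fun k => x k - y k.

Definition dot (n : nat) (x y : vec) : R := sum_f_R0 (fun k => x k * y k) n.
Definition vnorm (n : nat) (x : vec) : R := sqrt (dot n x x).

Definition veq (n : nat) (x y : vec) : Prop := forall k, (k <= n)%nat -> x k = y k.

Definition is_open_interval (I : R -> Prop) : Prop :=
  (exists x, I x) /\
  (forall x y z, I x -> I z -> x <= y <= z -> I y) /\
  (forall x, I x -> exists e, 0 < e /\ forall y, Rabs (y - x) < e -> I y).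

Definition vderiv (n : nat) (f : R -> vec) (s : R) (w : vec) : Prop :=
  forall k, (k <= n)%nat -> derivable_pt_lim (fun t => f t k) s (w k).

Definition smooth_on (I : R -> Prop) (f : R -> R) : Prop :=
  exists D : nat -> R -> R,
    (forall t, I t -> D 0%nat t = f t) /\
    (forall m t, I t -> derivable_pt_lim (D m) t (D (S m) t)).

Definition vsmooth_on (n : nat) (I : R -> Prop) (f : R -> vec) : Prop :=
  forall k, (k <= n)%nat -> smooth_on I (fun t => f t k).

(* prevu u j = u_{j-1}, with the convention u_{-1} = 0. *)
Definition prevu (u : nat -> R -> vec) (j : nat) (s : R) : vec :=
  match j with
  | O => vzero
  | S j' => u j' s
  end.

Definition minor (M : nat -> nat -> R) (j : nat) : nat -> nat -> R :=
  fun r c => M (S r) (if Nat.ltb c j then c else S c).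

Fixpoint det (m : nat) (M : nat -> nat -> R) : R :=
  match m with
  | O => 1
  | S m' => sum_f_R0 (fun j => (-1) ^ j * M 0%nat j * det m' (minor M j)) m'
  end.

(* The data (u_0,...,u_n ; kappa_0,...,kappa_{n-1}) is the spherical
   Frenet-type frame of the spherical unit speed curve u_0 on I,
   with u_n the spherical dual curve. *)
Definition spherical_frame (n : nat) (I : R -> Prop)
    (u : nat -> R -> vec) (kappa : nat -> R -> R) : Prop :=
  (forall s, I s -> kappa 0%nat s = 0) /\
  (forall i s, (1 <= i <= n - 1)%nat -> I s ->
     exists w, vderiv n (u (i - 1)%nat) s w /\
       let z := vadd w (vscale (kappa (i - 1)%nat s) (prevu u (i - 1)%nat s)) in
       kappa i s = vnorm n z /\ 0 < kappa i s /\
       veq n (u i s) (vscale (/ kappa i s) z)) /\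
  (forall s, I s ->
     dot n (u n s) (u n s) = 1 /\
     (forall i, (i < n)%nat -> dot n (u i s) (u n s) = 0) /\
     det (S n) (fun r c => u c s r) = 1).

Definition ped (n : nat) (P : vec) (un : R -> vec) (s : R) : vec :=
  vscale (/ sqrt (1 - (dot n P (un s)) ^ 2))
         (vsub P (vscale (dot n P (un s)) (un s))).

Definition ort (n : nat) (P : vec) (un : R -> vec) (s : R) : vec :=
  vsub P (vscale (2 * dot n P (un s)) (un s)).

Definition Phi (n : nat) (P : vec) (x : vec) : vec :=
  vsub (vscale (2 * dot n P x) x) P.

Definition basis (j : nat) : vec := fun k => if Nat.eqb k j then 1 else 0.

Definition singular_point_Phi (n : nat) (P : vec) (x : vec) : Prop :=
  exists J : nat -> nat -> R,
    (forall i j, (i <= n)%nat -> (j <= n)%nat ->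
       derivable_pt_lim (fun t => Phi n P (vadd x (vscale t (basis j))) i) 0 (J i j)) /\
    exists c : vec, (exists j, (j <= n)%nat /\ c j <> 0) /\
      forall i, (i <= n)%nat -> sum_f_R0 (fun j => J i j * c j) n = 0.

From Stdlib Require Import Reals Lra Lia.
Open Scope R_scope.

(* With a = P.u_n, the curves ped = (P - a u_n) / sqrt (1 - a^2) and ort = P - 2 a u_n
   satisfy ort = Phi_P (ped) and ped = (P + ort) / |P + ort|, so near any s each curve is a
   smooth function of the other and one is stationary exactly when the other is.  The
   second alternative never occurs: d(Phi_P)_x w = 2 (P.w) x + 2 (P.x) w is injective
   whenever P.x <> 0, and P.ped = sqrt (1 - a^2) > 0. *)

Lemma dot_self_nonneg m x : 0 <= dot m x x.
Proof. unfold dot; induction m; simpl; nra. Qed.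

Lemma dot_self_eq0 m x : dot m x x = 0 -> forall k, (k <= m)%nat -> x k = 0.
Proof.
  induction m as [|m IHm]; intros Hx k Hk.
  - replace k with 0%nat by lia. unfold dot in Hx; simpl in Hx. nra.
  - pose proof (dot_self_nonneg m x) as Hm.
    unfold dot in Hx; rewrite tech5 in Hx; fold (dot m x x) in Hx.
    destruct (Nat.eq_dec k (S m)) as [->|Hne]; [nra|].
    apply IHm; [nra|lia].
Qed.

Lemma dot_basis_l m j x : dot m (basis j) x = if Nat.leb j m then x j else 0.
Proof.
  induction m as [|m IHm]; unfold dot, basis in *.
  - destruct j; simpl; ring.
  - rewrite tech5, IHm. destruct (Nat.eqb_spec (S m) j) as [<-|Hne].
    + rewrite Nat.leb_refl. replace (Nat.leb (S m) m) with false
        by (symmetry; apply Nat.leb_gt; lia). ring.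
    + destruct (Nat.leb_spec j m), (Nat.leb_spec j (S m)); try lia; ring.
Qed.

Section DotProduct.
Variable n : nat.

Lemma dot_comm x y : dot n x y = dot n y x.
Proof. apply sum_eq; intros; ring. Qed.

Lemma dot_vadd_r x y z : dot n x (vadd y z) = dot n x y + dot n x z.
Proof. unfold dot, vadd. rewrite <- sum_plus. apply sum_eq; intros; ring. Qed.

Lemma dot_vsub_r x y z : dot n x (vsub y z) = dot n x y - dot n x z.
Proof. unfold dot, vsub. rewrite <- minus_sum. apply sum_eq; intros; ring. Qed.

Lemma dot_vscale_r x a y : dot n x (vscale a y) = a * dot n x y.
Proof. unfold dot, vscale. rewrite scal_sum. apply sum_eq; intros; ring. Qed.

Lemma dot_vzero_r x : dot n x vzero = 0.
Proof.
  unfold dot, vzero. rewrite <- (scal_sum x n 0). ring.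
Qed.

Lemma dot_vsub_l x y z : dot n (vsub x y) z = dot n x z - dot n y z.
Proof. rewrite !(dot_comm _ z). apply dot_vsub_r. Qed.

Lemma dot_vscale_l a x y : dot n (vscale a x) y = a * dot n x y.
Proof. rewrite !(dot_comm _ y). apply dot_vscale_r. Qed.

Lemma dot_basis_r x j : (j <= n)%nat -> dot n x (basis j) = x j.
Proof.
  intros Hj. rewrite dot_comm, dot_basis_l.
  now rewrite (proj2 (Nat.leb_le j n) Hj).
Qed.

(* [|P - a v|^2 = 1 - a^2] with [a = P.v], and it vanishes only for [P = a v], [a = +-1]. *)
Lemma dot_sq_lt_1 P v : dot n P P = 1 -> dot n v v = 1 ->
  ~ veq n P v -> ~ veq n P (vopp v) -> (dot n P v) ^ 2 < 1.
Proof.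
  intros HP Hv HPv HPmv. set (a := dot n P v).
  set (w := vsub P (vscale a v)).
  assert (Hw : dot n w w = 1 - a ^ 2).
  { unfold w. rewrite dot_vsub_l, !dot_vsub_r, !dot_vscale_l, !dot_vscale_r.
    rewrite (dot_comm v P), HP, Hv. fold a. ring. }
  destruct (Rle_lt_or_eq_dec _ _ (dot_self_nonneg n w)) as [Hlt|Heq]; [lra|].
  exfalso. rewrite <- Heq in Hw.
  assert (HPk : forall k, (k <= n)%nat -> P k = a * v k).
  { intros k Hk. pose proof (dot_self_eq0 n w (eq_sym Heq) k Hk) as Hk0.
    unfold w, vsub, vscale in Hk0. lra. }
  assert (Ha : (a - 1) * (a + 1) = 0) by nra.
  destruct (Rmult_integral _ _ Ha) as [Ha1|Ha1].
  - apply HPv. intros k Hk. rewrite HPk by exact Hk. replace a with 1 by lra. ring.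
  - apply HPmv. intros k Hk. rewrite HPk by exact Hk. unfold vopp.
    replace a with (-1) by lra. ring.
Qed.

End DotProduct.

Lemma derivable_pt_lim_inv_sqrt y : 0 < y ->
  derivable_pt_lim (fun t => / sqrt t) y (- / (2 * y * sqrt y)).
Proof.
  intros Hy.
  pose proof (sqrt_lt_R0 _ Hy) as Hs.
  assert (Hss : sqrt y * sqrt y = y) by (apply sqrt_sqrt; lra).
  apply (derivable_pt_lim_ext (fct_cte 1 / sqrt)%F).
  { intro t; unfold div_fct, fct_cte, Rdiv; ring. }
  replace (- / (2 * y * sqrt y))
    with ((0 * sqrt y - / (2 * sqrt y) * fct_cte 1 y) / Rsqr (sqrt y)).
  - apply derivable_pt_lim_div;
      [apply derivable_pt_lim_const | now apply derivable_pt_lim_sqrt | lra].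
  - unfold fct_cte, Rsqr. rewrite Hss. field. lra.
Qed.

Section VectorDerivatives.
Variable n : nat.

Lemma vderiv_value_ext f s w w' :
  vderiv n f s w -> (forall k, (k <= n)%nat -> w k = w' k) -> vderiv n f s w'.
Proof. intros Hf Hw k Hk. rewrite <- Hw by exact Hk. exact (Hf k Hk). Qed.

Lemma vderiv_locally_ext f g s a b w : a < s < b ->
  (forall t, a < t < b -> forall k, (k <= n)%nat -> f t k = g t k) ->
  vderiv n f s w -> vderiv n g s w.
Proof.
  intros Hs Hfg Hf k Hk.
  apply (derivable_pt_lim_locally_ext (fun t => f t k) _ s a b); auto.
Qed.

Lemma vderiv_const c s : vderiv n (fun _ => c) s vzero.
Proof. intros k _. apply derivable_pt_lim_const. Qed.

Lemma vderiv_vadd f g s w w' : vderiv n f s w -> vderiv n g s w' ->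
  vderiv n (fun t => vadd (f t) (g t)) s (vadd w w').
Proof. intros Hf Hg k Hk. apply derivable_pt_lim_plus; auto. Qed.

Lemma vderiv_vsub f g s w w' : vderiv n f s w -> vderiv n g s w' ->
  vderiv n (fun t => vsub (f t) (g t)) s (vsub w w').
Proof. intros Hf Hg k Hk. apply derivable_pt_lim_minus; auto. Qed.

Lemma vderiv_vscale g f s g' w : derivable_pt_lim g s g' -> vderiv n f s w ->
  vderiv n (fun t => vscale (g t) (f t)) s (vadd (vscale g' (f s)) (vscale (g s) w)).
Proof. intros Hg Hf k Hk. apply derivable_pt_lim_mult; auto. Qed.

Lemma vderiv_line x y s : vderiv n (fun t => vadd x (vscale t y)) s y.
Proof.
  eapply vderiv_value_ext.
  - apply vderiv_vadd; [apply vderiv_const|].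
    apply (vderiv_vscale id (fun _ => y)); [apply derivable_pt_lim_id | apply vderiv_const].
  - intros k _. unfold vadd, vscale, vzero. ring.
Qed.

Lemma derivable_pt_lim_dot P f s w : vderiv n f s w ->
  derivable_pt_lim (fun t => dot n P (f t)) s (dot n P w).
Proof.
  intros Hf. unfold dot.
  assert (Hsum : forall m, (m <= n)%nat -> derivable_pt_lim
    (fun t => sum_f_R0 (fun k => P k * f t k) m) s (sum_f_R0 (fun k => P k * w k) m)).
  { induction m as [|m IHm]; intros Hm; simpl.
    - apply (derivable_pt_lim_scal (fun t => f t 0%nat)), Hf; lia.
    - apply derivable_pt_lim_plus; [apply IHm; lia|].
      apply (derivable_pt_lim_scal (fun t => f t (S m))), Hf; lia. }
  exact (Hsum n (le_n n)).
Qed.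

End VectorDerivatives.

Definition dPhi (n : nat) (P x w : vec) : vec :=
  vadd (vscale (2 * dot n P w) x) (vscale (2 * dot n P x) w).

Lemma vderiv_Phi n P f s w : vderiv n f s w ->
  vderiv n (fun t => Phi n P (f t)) s (dPhi n P (f s) w).
Proof.
  intros Hf. unfold Phi. eapply vderiv_value_ext.
  - apply vderiv_vsub; [|apply vderiv_const].
    apply vderiv_vscale; [|exact Hf].
    apply (derivable_pt_lim_scal (fun t => dot n P (f t))), derivable_pt_lim_dot, Hf.
  - intros k _. unfold dPhi, vsub, vadd, vscale, vzero. ring.
Qed.

Lemma vderiv_Phi_stationary n P f s : vderiv n f s vzero ->
  vderiv n (fun t => Phi n P (f t)) s vzero.
Proof.
  intros Hf. eapply vderiv_value_ext; [exact (vderiv_Phi n P f s vzero Hf)|].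
  intros k _. unfold dPhi, vadd, vscale, vzero. rewrite dot_vzero_r. ring.
Qed.

Lemma dPhi_columns n P x c i : (i <= n)%nat ->
  sum_f_R0 (fun j => dPhi n P x (basis j) i * c j) n = dPhi n P x c i.
Proof.
  intros Hi.
  rewrite (sum_eq _ (fun j => P j * c j * (2 * x i) + basis i j * c j * (2 * dot n P x))).
  - rewrite sum_plus, <- !scal_sum.
    change (sum_f_R0 (fun j => basis i j * c j) n) with (dot n (basis i) c).
    change (sum_f_R0 (fun j => P j * c j) n) with (dot n P c).
    rewrite dot_basis_l, (proj2 (Nat.leb_le i n) Hi).
    unfold dPhi, vadd, vscale. ring.
  - intros j Hj. unfold dPhi, vadd, vscale.
    rewrite dot_basis_r by exact Hj. unfold basis. rewrite Nat.eqb_sym. ring.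
Qed.

(* Pairing [dPhi x c] with [P] gives [4 (P.x) (P.c)]. *)
Lemma dPhi_injective n P x c : dot n P x <> 0 ->
  (forall i, (i <= n)%nat -> dPhi n P x c i = 0) -> forall i, (i <= n)%nat -> c i = 0.
Proof.
  intros Hx Hker.
  assert (HPc : dot n P c = 0).
  { assert (H0 : dot n P (dPhi n P x c) = dot n P vzero).
    { apply sum_eq. intros i Hi. unfold vzero. rewrite Hker by exact Hi. reflexivity. }
    unfold dPhi in H0. rewrite dot_vadd_r, !dot_vscale_r, dot_vzero_r in H0.
    assert (H4 : (4 * dot n P x) * dot n P c = 0) by lra.
    destruct (Rmult_integral _ _ H4); [exfalso; apply Hx; lra | assumption]. }
  intros i Hi. specialize (Hker i Hi).
  unfold dPhi, vadd, vscale in Hker. rewrite HPc in Hker.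
  assert (H2 : (2 * dot n P x) * c i = 0) by lra.
  destruct (Rmult_integral _ _ H2); [exfalso; apply Hx; lra | assumption].
Qed.

Lemma Phi_nonsingular n P x : dot n P x <> 0 -> ~ singular_point_Phi n P x.
Proof.
  intros Hx [J [HJ [c [[j0 [Hj0 Hc0]] Hker]]]].
  assert (HJ_dPhi : forall i j, (i <= n)%nat -> (j <= n)%nat -> J i j = dPhi n P x (basis j) i).
  { intros i j Hi Hj. apply (uniqueness_limite _ 0 _ _ (HJ i j Hi Hj)).
    pose proof (vderiv_Phi n P _ 0 _ (vderiv_line n x (basis j) 0) i Hi) as H.
    replace (dPhi n P x (basis j) i)
      with (dPhi n P (vadd x (vscale 0 (basis j))) (basis j) i); [exact H|].
    unfold dPhi at 1. rewrite dot_vadd_r, dot_vscale_r.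
    unfold dPhi, vadd, vscale. ring. }
  apply Hc0. apply (dPhi_injective n P x c Hx); [|exact Hj0].
  intros i Hi. rewrite <- dPhi_columns, <- (Hker i Hi) by exact Hi.
  apply sum_eq. intros j Hj. now rewrite HJ_dPhi.
Qed.

(* For a unit vector [y <> -P] this is [(P + y) / |P + y|], as [|P + y|^2 = 2 (1 + P.y)];
   it inverts [Phi_P] on the hemisphere [P.x > 0]. *)
Definition bisector (n : nat) (P y : vec) : vec :=
  vscale (/ sqrt (2 * (1 + dot n P y))) (vadd P y).

Lemma vderiv_bisector_stationary n P f s : 0 < 1 + dot n P (f s) ->
  vderiv n f s vzero -> vderiv n (fun t => bisector n P (f t)) s vzero.
Proof.
  intros Hpos Hf.
  assert (Hnorm : derivable_pt_lim (fun t => 2 * (1 + dot n P (f t))) s 0).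
  { replace 0 with (2 * (0 + dot n P vzero)) by (rewrite dot_vzero_r; ring).
    apply (derivable_pt_lim_scal (fun t => 1 + dot n P (f t))), derivable_pt_lim_plus.
    - apply derivable_pt_lim_const.
    - apply derivable_pt_lim_dot, Hf. }
  assert (Hscale : derivable_pt_lim (fun t => / sqrt (2 * (1 + dot n P (f t)))) s 0).
  { pose proof (derivable_pt_lim_comp _ _ s _ _ Hnorm
      (derivable_pt_lim_inv_sqrt (2 * (1 + dot n P (f s))) ltac:(lra))) as H.
    rewrite Rmult_0_r in H. exact H. }
  unfold bisector. eapply vderiv_value_ext.
  - apply vderiv_vscale; [exact Hscale|].
    apply vderiv_vadd; [apply vderiv_const | exact Hf].
  - intros k _. unfold vadd, vscale, vzero. ring.
Qed.

Section PedalOrthotomic.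
Variables (n : nat) (P : vec) (un : R -> vec) (t : R).
Hypothesis HP : dot n P P = 1.

Lemma dot_ort : dot n P (ort n P un t) = 1 - 2 * (dot n P (un t)) ^ 2.
Proof. unfold ort. rewrite dot_vsub_r, dot_vscale_r, HP. ring. Qed.

Hypothesis Hlt : (dot n P (un t)) ^ 2 < 1.

Lemma dot_ped : dot n P (ped n P un t) = sqrt (1 - (dot n P (un t)) ^ 2).
Proof.
  unfold ped. rewrite dot_vscale_r, dot_vsub_r, dot_vscale_r, HP.
  set (a := dot n P (un t)) in *. set (r := sqrt (1 - a ^ 2)).
  assert (Hr : 0 < r) by (apply sqrt_lt_R0; lra).
  assert (Hrr : r * r = 1 - a ^ 2) by (apply sqrt_sqrt; lra).
  replace (1 - a * a) with (r * r) by (rewrite Hrr; ring).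
  field. lra.
Qed.

Lemma Phi_ped k : Phi n P (ped n P un t) k = ort n P un t k.
Proof.
  unfold Phi at 1. rewrite dot_ped.
  assert (Hr : 0 < sqrt (1 - (dot n P (un t)) ^ 2)) by (apply sqrt_lt_R0; lra).
  unfold ped, ort, vsub, vscale. field. lra.
Qed.

Lemma bisector_ort k : bisector n P (ort n P un t) k = ped n P un t k.
Proof.
  unfold bisector. rewrite dot_ort.
  set (a := dot n P (un t)) in *.
  assert (Hr : 0 < sqrt (1 - a ^ 2)) by (apply sqrt_lt_R0; lra).
  replace (2 * (1 + (1 - 2 * a ^ 2))) with (2 ^ 2 * (1 - a ^ 2)) by ring.
  rewrite sqrt_mult, sqrt_pow2 by lra.
  unfold ped, ort, vscale, vadd, vsub. fold a. field. lra.
Qed.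

End PedalOrthotomic.

Theorem lemma9 (n : nat) (I : R -> Prop) (gamma : R -> vec)
    (u : nat -> R -> vec) (kappa : nat -> R -> R) (P : vec) :
  (2 <= n)%nat ->
  is_open_interval I ->
  vsmooth_on n I gamma ->
  (forall s, I s -> dot n (gamma s) (gamma s) = 1) ->
  (forall s, I s -> exists w, vderiv n gamma s w /\ vnorm n w = 1) ->
  (forall s, I s -> veq n (u 0%nat s) (gamma s)) ->
  spherical_frame n I u kappa ->
  dot n P P = 1 ->
  (forall s, I s -> ~ veq n P (u n s) /\ ~ veq n P (vopp (u n s))) ->
  forall s, I s ->
    (vderiv n (ort n P (u n)) s vzero <->
     (vderiv n (ped n P (u n)) s vzero \/
      singular_point_Phi n P (ped n P (u n) s))).
Proof.
  intros _ [_ [_ Hopen]] _ _ _ _ [_ [_ Hdual]] HP Hne s Hs.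
  assert (Hlt : forall t, I t -> (dot n P (u n t)) ^ 2 < 1).
  { intros t Ht. destruct (Hne t Ht). apply dot_sq_lt_1; auto. apply Hdual, Ht. }
  destruct (Hopen s Hs) as [e [He Hball]].
  assert (Hnear : forall t, s - e < t < s + e -> I t).
  { intros t Ht. apply Hball. apply Rabs_def1; lra. }
  assert (Hs_ball : s - e < s < s + e) by lra.
  split.
  - intros Hort. left.
    apply (vderiv_locally_ext n (fun t => bisector n P (ort n P (u n) t)) (ped n P (u n))
             s (s - e) (s + e) _ Hs_ball).
    { intros t Ht k _. apply bisector_ort; auto. }
    apply vderiv_bisector_stationary; [|exact Hort].
    rewrite dot_ort by exact HP. pose proof (Hlt s Hs). lra.
  - intros [Hped | Hsing].
    + apply (vderiv_locally_ext n (fun t => Phi n P (ped n P (u n) t)) (ort n P (u n))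
               s (s - e) (s + e) _ Hs_ball).
      { intros t Ht k _. apply Phi_ped; auto. }
      apply vderiv_Phi_stationary, Hped.
    + exfalso. revert Hsing. apply Phi_nonsingular.
      rewrite dot_ped by auto. apply Rgt_not_eq, sqrt_lt_R0. pose proof (Hlt s Hs). lra.
Qed.
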